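(* Let $S$ be a set, let $\mathcal{T}\subseteq \mathcal{P}(S)$ be a nonempty family containing a countable subfamily that separates points of $S$, and let $\mathcal{H}\subseteq\mathcal{P}(S)$ be a semiring. Then $\mathcal{C}(\mathcal{T})\subseteq\mathcal{C}(\mathcal{H})$ if and only if every element of $\mathcal{T}$ is a countable union of sets from $\mathcal{H}$.
   Context: $C(S)$ is the set of countable subsets of $S$; $N_A(M)=|A\cap M|$ for $A\subseteq S$, $M\in C(S)$; for nonempty $\mathcal{T}\subseteq\mathcal{P}(S)$, $\mathcal{C}(\mathcal{T})=\sigma(N_A\mid A\in\mathcal{T})$ (a $\sigma$-field on $C(S)$). A family $\mathcal{E}$ separates points of $S$ if for any distinct $x,y\in S$ there is $A\in\mathcal{E}$ with $1_A(x)\ne1_A(y)$. *)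

From Stdlib Require Import List.
Import ListNotations.

Definition set (X : Type) := X -> Prop.

Definition countable {S : Type} (M : set S) : Prop :=
  exists f : S -> nat, forall x y, M x -> M y -> f x = f y -> x = y.

Definition CS (S : Type) := { M : set S | countable M }.

(* Cardinality in the extended naturals N ∪ {∞}: Some n = n, None = ∞. *)
Definition has_card {S : Type} (P : set S) (k : option nat) : Prop :=
  match k with
  | Some n => exists l : list S, NoDup l /\ length l = n /\ (forall x, P x <-> In x l)
  | None => ~ exists l : list S, forall x, P x <-> In x l
  end.

Definition N_eq {S : Type} (A : set S) (M : CS S) (k : option nat) : Prop :=
  has_card (fun x => A x /\ proj1_sig M x) k.

Definition is_sigma_algebra {X : Type} (F : set (set X)) : Prop :=
  F (fun _ => True) /\
  (forall Y, F Y -> F (fun x => ~ Y x)) /\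
  (forall Y : nat -> set X, (forall n, F (Y n)) -> F (fun x => exists n, Y n x)).

Definition sigma_gen {X : Type} (G : set (set X)) : set (set X) :=
  fun Y => forall F, is_sigma_algebra F -> (forall Z, G Z -> F Z) -> F Y.

(* C(T) = σ(N_A | A ∈ T): generated by the level sets {M | N_A(M) = k},
   k ∈ N ∪ {∞} (N ∪ {∞} carrying its discrete σ-field). *)
Definition calC {S : Type} (T : set (set S)) : set (set (CS S)) :=
  sigma_gen (fun Y => exists A k, T A /\ Y = (fun M => N_eq A M k)).

Definition separates {S : Type} (E : nat -> set S) : Prop :=
  forall x y : S, x <> y -> exists n, ~ (E n x <-> E n y).

Definition semiring {S : Type} (H : set (set S)) : Prop :=
  H (fun _ => False) /\
  (forall A B, H A -> H B -> H (fun x => A x /\ B x)) /\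
  (forall A B, H A -> H B ->
     exists (n : nat) (C : nat -> set S),
       (forall i, i < n -> H (C i)) /\
       (forall i j x, i < n -> j < n -> i <> j -> C i x -> C j x -> False) /\
       (forall x, (A x /\ ~ B x) <-> exists i, i < n /\ C i x)).

Definition countable_union_of {S : Type} (H : set (set S)) (A : set S) : Prop :=
  exists B : nat -> set S, (forall n, H (B n)) /\ (forall x, A x <-> exists n, B n x).

(* (⇐) Call A counting-measurable when every event "A ∩ M has at least n
   points" lies in C(H).  Members of H are counting-measurable, the class is
   closed under finite disjoint and increasing countable unions, and the
   semiring axioms write any countable union of members of H as an increasing
   union of finite disjoint unions of members of H.  The level sets of N_A are
   then events of C(H).

   (⇒) Every event of C(H) depends only on the counts in some sequence h_0,
   h_1, ... of members of H, since such events form a σ-field containing the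
   generators.  For the event "A ∩ M = ∅", comparing suitable singletons and
   countable sequences M shows that each x ∈ A lies in some h_k and in an
   "atom" (a set of points with a prescribed membership in h_0, ..., h_{n-1})
   contained in A.  Atoms are finite disjoint unions of members of H and there
   are countably many of them, so A is a countable union of members of H. *)

From Stdlib Require Import List Arith Lia Cantor ClassicalEpsilon FunctionalExtensionality PropExtensionality.
Import ListNotations.

Lemma set_ext {X : Type} (P Q : set X) : (forall z, P z <-> Q z) -> P = Q.
Proof.
  intros e; apply functional_extensionality; intros z.
  apply propositional_extensionality, e.
Qed.

Lemma sigma_gen_is_sigma_algebra {X : Type} (G : set (set X)) :
  is_sigma_algebra (sigma_gen G).
Proof.
  split; [|split].
  - intros F hF _; exact (proj1 hF).
  - intros Y hY F hF hG; apply (proj1 (proj2 hF)), hY; auto.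
  - intros Y hY F hF hG; apply (proj2 (proj2 hF)); intros n; apply hY; auto.
Qed.

Lemma sigma_gen_incl {X : Type} (G : set (set X)) Z : G Z -> sigma_gen G Z.
Proof. intros hZ F _ hG; auto. Qed.

Section SigmaAlgebra.
Context {X : Type} (F : set (set X)) (hF : is_sigma_algebra F).

Lemma sa_ext A B : F A -> (forall x, A x <-> B x) -> F B.
Proof. intros hA e; rewrite <- (set_ext _ _ e); exact hA. Qed.

Lemma sa_full : F (fun _ => True).
Proof. exact (proj1 hF). Qed.

Lemma sa_compl A : F A -> F (fun x => ~ A x).
Proof. exact (proj1 (proj2 hF) A). Qed.

Lemma sa_union (Y : nat -> set X) : (forall n, F (Y n)) -> F (fun x => exists n, Y n x).
Proof. exact (proj2 (proj2 hF) Y). Qed.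

Lemma sa_inter (Y : nat -> set X) : (forall n, F (Y n)) -> F (fun x => forall n, Y n x).
Proof.
  intros hY.
  apply (sa_ext _ _ (sa_compl _ (sa_union (fun n x => ~ Y n x) (fun n => sa_compl _ (hY n))))).
  intros x; split.
  - intros hx n; apply NNPP; intros c; apply hx; exists n; exact c.
  - intros hx [n c]; exact (c (hx n)).
Qed.

Lemma sa_and A B : F A -> F B -> F (fun x => A x /\ B x).
Proof.
  intros hA hB.
  apply (sa_ext _ _ (sa_inter (fun n => match n with 0 => A | _ => B end)
                              (fun n => match n with 0 => hA | _ => hB end))).
  intros x; split.
  - intros hx; split; [exact (hx 0) | exact (hx 1)].
  - intros [a b] [|n]; assumption.
Qed.

Lemma sa_guard (P : Prop) A : (P -> F A) -> F (fun x => P /\ A x).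
Proof.
  intros hA; destruct (classic P) as [p|np].
  - apply (sa_ext _ _ (hA p)); tauto.
  - apply (sa_ext _ _ (sa_compl _ sa_full)); tauto.
Qed.
End SigmaAlgebra.

(* [at_least n P]: the set [P] has at least [n] distinct elements.  The counts
   N_A(M) are handled through these monotone events. *)
Definition at_least {X : Type} (n : nat) (P : set X) : Prop :=
  exists l, NoDup l /\ length l = n /\ forall x, In x l -> P x.

Section Cardinality.
Context {X : Type}.
Implicit Types (P Q : set X).

Lemma at_least_0 P : at_least 0 P.
Proof. exists []; repeat split; [constructor | intros x []]. Qed.

Lemma at_least_le n m P : m <= n -> at_least n P -> at_least m P.
Proof.
  induction 1 as [|n _ IH]; auto.
  intros [[|a l] [nd [len hl]]]; [discriminate|].
  apply IH; exists l; inversion nd; simpl in *; repeat split; auto; lia.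
Qed.

Lemma at_least_mono n P Q : (forall z, P z -> Q z) -> at_least n P -> at_least n Q.
Proof. intros hPQ [l [nd [len hl]]]; exists l; repeat split; auto. Qed.

Lemma at_least_extend P l : NoDup l -> (forall x, In x l -> P x) ->
  (exists x, P x /\ ~ In x l) -> at_least (S (length l)) P.
Proof.
  intros nd hl [x [px nx]]; exists (x :: l); repeat split.
  - constructor; assumption.
  - intros y [<-|hy]; auto.
Qed.

Lemma has_card_Some_iff P m : has_card P (Some m) <-> at_least m P /\ ~ at_least (S m) P.
Proof.
  split.
  - intros [l [nd [len hl]]]; split.
    + exists l; repeat split; auto; intros x; apply hl.
    + intros [l' [nd' [len' hl']]].
      assert (length l' <= length l) by (apply (NoDup_incl_length nd'); intros x hx; apply hl, hl', hx).
      lia.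
  - intros [[l [nd [len hl]]] hn]; exists l; repeat split; auto.
    intros px; apply NNPP; intros nx; apply hn; subst m.
    apply at_least_extend; eauto.
Qed.

Lemma has_card_None_iff P : has_card P None <-> forall n, at_least n P.
Proof.
  split.
  - intros hinf n; induction n as [|n [l [nd [len hl]]]]; [apply at_least_0|].
    subst n; apply at_least_extend; auto.
    apply NNPP; intros c; apply hinf; exists l; intros x; split; auto.
    intros px; apply NNPP; intros nx; apply c; eauto.
  - intros hn [l hl]; destruct (hn (S (length l))) as [l' [nd [len hl']]].
    assert (length l' <= length l) by (apply (NoDup_incl_length nd); intros x hx; apply hl, hl', hx).
    lia.
Qed.

Lemma has_card_eq P c : has_card P c -> forall k, has_card P k <-> k = c.
Proof.
  assert (Some_None : forall m, has_card P (Some m) -> ~ has_card P None).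
  { intros m hm hinf; apply has_card_Some_iff in hm.
    exact (proj2 hm (proj1 (has_card_None_iff P) hinf (S m))). }
  intros hc [m|]; split; intros hk; subst; auto.
  - destruct c as [m'|]; [|exfalso; exact (Some_None m hk hc)].
    apply has_card_Some_iff in hk as [hk1 hk2]; apply has_card_Some_iff in hc as [hc1 hc2].
    assert (~ m < m') by (intros lt; apply hk2, (at_least_le m'); auto).
    assert (~ m' < m) by (intros lt; apply hc2, (at_least_le m); auto).
    f_equal; lia.
  - destruct c as [m|]; [exfalso; exact (Some_None m hc hk) | reflexivity].
Qed.

Lemma not_at_least P n : ~ at_least n P -> exists m, m < n /\ has_card P (Some m).
Proof.
  induction n as [|n IH]; intros hn; [exfalso; apply hn, at_least_0|].
  destruct (classic (at_least n P)) as [hP|hP].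
  - exists n; split; [lia | apply has_card_Some_iff; auto].
  - destruct (IH hP) as [m [lt hm]]; exists m; split; [lia | exact hm].
Qed.

Lemma has_card_0 P : has_card P (Some 0) <-> forall z, ~ P z.
Proof.
  split.
  - intros [[|a l] [_ [len hl]]] z pz; [exact (proj1 (hl z) pz) | discriminate].
  - intros hP; exists []; repeat split; [constructor | intros pz; exact (hP x pz) | intros []].
Qed.

Lemma has_card_1 P x : P x -> (forall w, P w -> w = x) -> has_card P (Some 1).
Proof.
  intros px hx; exists [x]; repeat split.
  - constructor; [intros [] | constructor].
  - intros pw; left; symmetry; auto.
  - intros [<-|[]]; exact px.
Qed.

Lemma has_card_infinite P : (forall l, exists z, P z /\ ~ In z l) -> has_card P None.
Proof. intros hP [l hl]; destruct (hP l) as [z [pz nz]]; apply nz, hl, pz. Qed.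

Lemma at_least_disjoint_union P Q n : (forall z, P z -> Q z -> False) ->
  (at_least n (fun z => P z \/ Q z) <->
   exists c, c <= n /\ at_least c P /\ at_least (n - c) Q).
Proof.
  intros hd; split.
  - intros [l [nd [len hl]]].
    set (inP := fun z => if excluded_middle_informative (P z) then true else false).
    pose proof (filter_length inP l) as split_len.
    exists (length (filter inP l)); split; [lia|split].
    + exists (filter inP l); repeat split; auto using NoDup_filter.
      intros x hx; apply filter_In in hx as [_ hx]; unfold inP in hx.
      destruct (excluded_middle_informative (P x)); [assumption | discriminate].
    + exists (filter (fun x => negb (inP x)) l); repeat split; auto using NoDup_filter; [lia|].
      intros x hx; apply filter_In in hx as [hx hx']; unfold inP in hx'.
      destruct (excluded_middle_informative (P x)); [discriminate|].
      destruct (hl x hx); tauto.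
  - intros [c [le [[l1 [nd1 [len1 h1]]] [l2 [nd2 [len2 h2]]]]]].
    exists (l1 ++ l2); repeat split.
    + apply NoDup_app; auto; intros z z1 z2; eapply hd; eauto.
    + rewrite length_app; lia.
    + intros x hx; apply in_app_or in hx as [hx|hx]; auto.
Qed.

(* Counting in an increasing union: finitely many points lie in one stage. *)
Lemma at_least_increasing_union (U : nat -> set X) n :
  (forall a b z, a <= b -> U a z -> U b z) ->
  (at_least n (fun z => exists N, U N z) <-> exists N, at_least n (U N)).
Proof.
  intros hmono; split.
  - intros [l [nd [len hl]]].
    assert (stage : exists N, forall x, In x l -> U N x).
    { clear nd len; induction l as [|y l IH]; [exists 0; intros x []|].
      destruct IH as [N hN]; [intros x hx; apply hl; right; exact hx|].
      destruct (hl y (or_introl eq_refl)) as [N' hN'].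
      exists (N + N'); intros x [<-|hx]; [apply (hmono N') | apply (hmono N)]; auto; lia. }
    destruct stage as [N hN]; exists N, l; auto.
  - intros [N hN]; exact (at_least_mono n _ _ (fun z hz => ex_intro _ N hz) hN).
Qed.
End Cardinality.

Fixpoint pairwise_disjoint {X : Type} (l : list (set X)) : Prop :=
  match l with
  | [] => True
  | C :: l' => (forall D z, In D l' -> C z -> D z -> False) /\ pairwise_disjoint l'
  end.

Definition disjoint_decomp {X : Type} (H : set (set X)) (A : set X) (l : list (set X)) : Prop :=
  (forall C, In C l -> H C) /\ pairwise_disjoint l /\
  forall z, A z <-> exists C, In C l /\ C z.

Lemma pairwise_disjoint_app {X : Type} (l1 l2 : list (set X)) :
  pairwise_disjoint l1 -> pairwise_disjoint l2 ->
  (forall C D z, In C l1 -> In D l2 -> C z -> D z -> False) -> pairwise_disjoint (l1 ++ l2).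
Proof.
  induction l1 as [|C l1 IH]; simpl; auto.
  intros [hC h1] h2 h12; split.
  - intros D z hD Cz Dz; apply in_app_or in hD as [hD|hD]; eauto.
  - apply IH; eauto.
Qed.

Lemma pairwise_disjoint_seq {X : Type} (C : nat -> set X) a n :
  (forall i j x, a <= i < a + n -> a <= j < a + n -> i <> j -> C i x -> C j x -> False) ->
  pairwise_disjoint (map C (seq a n)).
Proof.
  revert a; induction n as [|n IH]; intros a hC; simpl; auto; split.
  - intros D z hD Ca Dz; apply in_map_iff in hD as [i [<- hi]]; apply in_seq in hi.
    apply (hC a i z); auto; lia.
  - apply IH; intros i j x hi hj; apply hC; lia.
Qed.

Section Decompositions.
Context {X : Type} (H : set (set X)) (hH : semiring H).

Lemma semiring_diff_decomp A B : H A -> H B ->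
  exists l, disjoint_decomp H (fun z => A z /\ ~ B z) l.
Proof.
  intros hA hB; destruct hH as [_ [_ hdiff]].
  destruct (hdiff A B hA hB) as [n [C [hCH [hCd hCu]]]].
  exists (map C (seq 0 n)); split; [|split].
  - intros D hD; apply in_map_iff in hD as [i [<- hi]]; apply in_seq in hi; apply hCH; lia.
  - apply pairwise_disjoint_seq; intros i j x hi hj; apply hCd; lia.
  - intros z; rewrite hCu; split.
    + intros [i [hi hz]]; exists (C i); split; auto; apply in_map, in_seq; lia.
    + intros [D [hD hz]]; apply in_map_iff in hD as [i [<- hi]]; apply in_seq in hi.
      exists i; split; auto; lia.
Qed.

Lemma decomp_diff l : forall A B, disjoint_decomp H A l -> H B ->
  exists l', disjoint_decomp H (fun z => A z /\ ~ B z) l'.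
Proof.
  induction l as [|C l IH]; intros A B [hlH [hld hlu]] hB.
  - exists []; split; [intros C []|split; [exact I|]].
    intros z; rewrite hlu; split; [intros [[C [[] _]] _] | intros [C [[] _]]].
  - destruct hld as [hCl hld].
    destruct (IH (fun z => exists D, In D l /\ D z) B) as [l2 [h2H [h2d h2u]]];
      [split; [intros D hD; apply hlH; right; exact hD | split; [exact hld | tauto]] | exact hB |].
    destruct (semiring_diff_decomp C B (hlH C (or_introl eq_refl)) hB) as [l1 [h1H [h1d h1u]]].
    exists (l1 ++ l2); split; [|split].
    + intros D hD; apply in_app_or in hD as [hD|hD]; auto.
    + apply pairwise_disjoint_app; auto.
      intros D E z hD hE Dz Ez.
      assert (Cz : C z) by (apply (h1u z); eauto).
      assert (hz : (exists D, In D l /\ D z) /\ ~ B z) by (apply h2u; eauto).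
      destruct hz as [[D' [hD' D'z]] _]; eapply hCl; eauto.
    + intros z; split.
      * intros [Az nBz]; apply hlu in Az as [D [[<-|hD] Dz]].
        -- destruct (proj1 (h1u z) (conj Dz nBz)) as [E [hE Ez]].
           exists E; split; [apply in_or_app; left|]; assumption.
        -- destruct (proj1 (h2u z) (conj (ex_intro _ D (conj hD Dz)) nBz)) as [E [hE Ez]].
           exists E; split; [apply in_or_app; right|]; assumption.
      * intros [E [hE Ez]]; apply in_app_or in hE as [hE|hE].
        -- destruct (proj2 (h1u z) (ex_intro _ E (conj hE Ez))) as [Cz nBz].
           split; [apply hlu; exists C; split; [left|]|]; auto.
        -- destruct (proj2 (h2u z) (ex_intro _ E (conj hE Ez))) as [[D [hD Dz]] nBz].
           split; [apply hlu; exists D; split; [right|]|]; auto.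
Qed.

Lemma decomp_inter l A B : disjoint_decomp H A l -> H B ->
  disjoint_decomp H (fun z => A z /\ B z) (map (fun C z => C z /\ B z) l).
Proof.
  intros [hlH [hld hlu]] hB; destruct hH as [_ [hinter _]]; split; [|split].
  - intros D hD; apply in_map_iff in hD as [C [<- hC]]; auto.
  - clear hlH hlu; induction l as [|C l IH]; simpl in *; auto.
    destruct hld as [hCl hld]; split; auto.
    intros D z hD [Cz _] Dz; apply in_map_iff in hD as [E [<- hE]].
    exact (hCl E z hE Cz (proj1 Dz)).
  - intros z; rewrite hlu; split.
    + intros [[C [hC Cz]] Bz]; exists (fun z => C z /\ B z); split; auto.
      apply in_map_iff; eauto.
    + intros [D [hD Dz]]; apply in_map_iff in hD as [C [<- hC]].
      destruct Dz; split; eauto.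
Qed.
End Decompositions.

Section CountingMeasurable.
Context {X : Type} (H : set (set X)) (hH : semiring H).

Definition counting_measurable (A : set X) : Prop :=
  forall n, calC H (fun M => at_least n (fun z => A z /\ proj1_sig M z)).

Let calC_sa : is_sigma_algebra (calC H) := sigma_gen_is_sigma_algebra _.

Lemma calC_generator A k : H A -> calC H (fun M => N_eq A M k).
Proof. intros hA; apply sigma_gen_incl; exists A, k; auto. Qed.

Lemma cm_ext A B : counting_measurable A -> (forall z, A z <-> B z) -> counting_measurable B.
Proof. intros hA e; rewrite <- (set_ext _ _ e); exact hA. Qed.

(* "At least n points" is the complement of "exactly m points for some m < n". *)
Lemma cm_member B : H B -> counting_measurable B.
Proof.
  intros hB n.
  apply (sa_ext _ _ _
           (sa_compl _ calC_sa _ (sa_union _ calC_sa (fun m M => m < n /\ N_eq B M (Some m))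
              (fun m => sa_guard _ calC_sa _ _ (fun _ => calC_generator B (Some m) hB))))).
  intros M; split.
  - intros hn; apply NNPP; intros c; apply hn.
    destruct (not_at_least _ _ c) as [m [lt hm]]; exists m; auto.
  - intros hn [m [lt hm]]; apply has_card_Some_iff in hm as [_ hm].
    apply hm, (at_least_le n); auto.
Qed.

Lemma cm_disjoint_union A B : (forall z, A z -> B z -> False) ->
  counting_measurable A -> counting_measurable B -> counting_measurable (fun z => A z \/ B z).
Proof.
  intros hd hA hB n.
  apply (sa_ext _ _ _
           (sa_union _ calC_sa (fun c M => c <= n /\ (at_least c (fun z => A z /\ proj1_sig M z) /\
                                           at_least (n - c) (fun z => B z /\ proj1_sig M z)))
              (fun c => sa_guard _ calC_sa _ _ (fun _ => sa_and _ calC_sa _ _ (hA c) (hB (n - c)))))).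
  intros M.
  rewrite (set_ext (fun z => (A z \/ B z) /\ proj1_sig M z)
                   (fun z => (A z /\ proj1_sig M z) \/ (B z /\ proj1_sig M z))) by tauto.
  rewrite at_least_disjoint_union; [tauto|].
  intros z [Az _] [Bz _]; eauto.
Qed.

Lemma cm_decomp A l : disjoint_decomp H A l -> counting_measurable A.
Proof.
  revert A; induction l as [|C l IH]; intros A [hlH [hld hlu]].
  - apply (cm_ext _ _ (cm_member _ (proj1 hH))).
    intros z; rewrite hlu; split; [intros [] | intros [C [[] _]]].
  - destruct hld as [hCl hld].
    apply (cm_ext (fun z => C z \/ exists D, In D l /\ D z)).
    + apply cm_disjoint_union.
      * intros z Cz [D [hD Dz]]; eauto.
      * apply cm_member, hlH; left; reflexivity.
      * apply IH; split; [intros D hD; apply hlH; right; exact hD | split; [exact hld | tauto]].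
    + intros z; rewrite hlu; split.
      * intros [Cz|[D [hD Dz]]]; [exists C|exists D]; simpl; auto.
      * intros [D [[<-|hD] Dz]]; eauto.
Qed.

Lemma cm_increasing_union (U : nat -> set X) : (forall a b z, a <= b -> U a z -> U b z) ->
  (forall N, counting_measurable (U N)) -> counting_measurable (fun z => exists N, U N z).
Proof.
  intros hmono hU n; apply (sa_ext _ _ _ (sa_union _ calC_sa _ (fun N => hU N n))).
  intros M.
  rewrite (set_ext (fun z => (exists N, U N z) /\ proj1_sig M z) (fun z => exists N, U N z /\ proj1_sig M z))
    by (intros z; split; [intros [[N a] b] | intros [N [a b]]]; eauto).
  rewrite at_least_increasing_union; [tauto|].
  intros a b z le [Uz Mz]; split; eauto.
Qed.

(* B_0 ∪ ... ∪ B_N is a finite disjoint union of members of [H]; hence every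
   countable union of members of [H] is an increasing union of such sets. *)
Lemma cm_countable_union A : countable_union_of H A -> counting_measurable A.
Proof.
  intros [B [hB hAB]].
  set (U := fix U N := match N with 0 => B 0 | S N => fun z => U N z \/ B (S N) z end).
  assert (hmono : forall a b z, a <= b -> U a z -> U b z)
    by (intros a b z le; induction le; simpl; auto).
  assert (diff_U : forall N C, H C -> exists l, disjoint_decomp H (fun z => C z /\ ~ U N z) l).
  { induction N as [|N IH]; intros C hC; [exact (semiring_diff_decomp H hH C (B 0) hC (hB 0))|].
    destruct (IH C hC) as [l hl].
    destruct (decomp_diff H hH l _ _ hl (hB (S N))) as [l' hl'].
    exists l'; rewrite (set_ext _ (fun z => (C z /\ ~ U N z) /\ ~ B (S N) z)); auto.
    intros z; simpl; tauto. }
  assert (hU : forall N, counting_measurable (U N)).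
  { induction N as [|N IH]; [exact (cm_member _ (hB 0))|].
    destruct (diff_U N (B (S N)) (hB (S N))) as [l hl].
    apply (cm_ext (fun z => U N z \/ (B (S N) z /\ ~ U N z))).
    + apply cm_disjoint_union; [intros z Uz [_ nUz]; auto | exact IH | exact (cm_decomp _ _ hl)].
    + intros z; simpl; tauto. }
  apply (cm_ext _ _ (cm_increasing_union U hmono hU)).
  intros z; rewrite hAB; split.
  - intros [N UNz]; induction N as [|N IH]; [eauto | destruct UNz; eauto].
  - intros [N Bz]; exists N; destruct N; simpl; auto.
Qed.

(* N_A(M) = m iff "at least m" and not "at least m+1"; N_A(M) = ∞ iff "at least n" for all n. *)
Lemma cm_level A k : counting_measurable A -> calC H (fun M => N_eq A M k).
Proof.
  intros hA; destruct k as [m|].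
  - apply (sa_ext _ _ _ (sa_and _ calC_sa _ _ (hA m) (sa_compl _ calC_sa _ (hA (S m))))).
    intros M; unfold N_eq; rewrite has_card_Some_iff; tauto.
  - apply (sa_ext _ _ _ (sa_inter _ calC_sa _ hA)).
    intros M; unfold N_eq; rewrite has_card_None_iff; tauto.
Qed.
End CountingMeasurable.

Section Determination.
Context {X : Type} (H : set (set X)).

Definition same_counts (h : nat -> set X) (M M' : CS X) : Prop :=
  forall j k, N_eq (h j) M k <-> N_eq (h j) M' k.

Definition determined_by (h : nat -> set X) (Y : set (CS X)) : Prop :=
  forall M M', same_counts h M M' -> (Y M <-> Y M').

Definition countably_determined (Y : set (CS X)) : Prop :=
  exists h : nat -> set X, (forall j, H (h j)) /\ determined_by h Y.

(* Countably many sequences of determining sets merge into one via Cantor pairing. *)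
Lemma countably_determined_sa : (exists B, H B) -> is_sigma_algebra countably_determined.
Proof.
  intros [B hB]; split; [|split].
  - exists (fun _ => B); split; [auto | intros M M' _; tauto].
  - intros Y [h [hh hY]]; exists h; split; auto.
    intros M M' s; specialize (hY M M' s); tauto.
  - intros Y hY; apply choice in hY as [h hh].
    exists (fun j => h (fst (of_nat j)) (snd (of_nat j))); split.
    + intros j; apply hh.
    + intros M M' s.
      assert (hYn : forall n, Y n M <-> Y n M').
      { intros n; apply hh; intros j k.
        specialize (s (to_nat (n, j)) k); cbv beta in s; rewrite cancel_of_to in s; exact s. }
      split; intros [n hn]; exists n; apply hYn; exact hn.
Qed.

Lemma calC_countably_determined Y : (exists B, H B) -> calC H Y -> countably_determined Y.
Proof.
  intros hne hY; apply hY; [exact (countably_determined_sa hne)|].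
  intros Z [A [k [hA ->]]]; exists (fun _ => A); split; auto.
  intros M M' s; exact (s 0 k).
Qed.
End Determination.

(* A few explicit countable sets, used as test configurations M. *)
Section CountableSets.
Context {X : Type}.

Lemma countable_sub (P Q : set X) : countable P -> (forall z, Q z -> P z) -> countable Q.
Proof. intros [f hf] hQP; exists f; auto. Qed.

Lemma countable_range (y : nat -> X) : countable (fun z => exists n, y n = z).
Proof.
  exists (fun z => match excluded_middle_informative (exists n, y n = z) with
           | left e => proj1_sig (constructive_indefinite_description _ e)
           | right _ => 0 end).
  intros z w hz hw.
  destruct (excluded_middle_informative (exists n, y n = z)) as [ez|]; [|contradiction].
  destruct (excluded_middle_informative (exists n, y n = w)) as [ew|]; [|contradiction].
  destruct (constructive_indefinite_description _ ez) as [a <-].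
  destruct (constructive_indefinite_description _ ew) as [b <-].
  simpl; intros ->; reflexivity.
Qed.

Definition single_CS (x : X) : CS X :=
  exist _ (fun z => z = x) (countable_sub _ _ (countable_range (fun _ => x)) (fun z e => ex_intro _ 0 (eq_sym e))).

Definition empty_CS : CS X :=
  exist _ (fun _ => False) (ex_intro _ (fun _ => 0) (fun x _ hx _ _ => False_ind _ hx)).

Definition range_CS (y : nat -> X) : CS X :=
  exist _ (fun z => exists n, y n = z) (countable_range y).

Definition insert_CS (x : X) (y : nat -> X) : CS X :=
  exist _ (fun z => z = x \/ exists n, y n = z)
    (countable_sub _ _ (countable_range (fun n => match n with 0 => x | S n => y n end))
       (fun z hz => match hz with
                    | or_introl e => ex_intro _ 0 (eq_sym e)
                    | or_intror (ex_intro _ n e) => ex_intro _ (S n) e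
                    end)).
Lemma eventually_avoids_list (y : nat -> X) :
  (forall z, exists N, forall n, N <= n -> y n <> z) ->
  forall l, exists N, forall n, N <= n -> ~ In (y n) l.
Proof.
  intros hy l; induction l as [|a l [N hN]]; [exists 0; intros n _ []|].
  destruct (hy a) as [N' hN'].
  exists (N + N'); intros n le [e|hin]; [apply (hN' n) | apply (hN n)]; auto; lia.
Qed.
End CountableSets.

(* Suppose the event "A ∩ M = ∅" is determined by the counts in h_0, h_1, ....
   Testing it on well-chosen countable sets M localizes A: every point of A is
   covered by some h_k, and belongs to A together with every point that has the
   same membership pattern in h_0, ..., h_{n-1} for some n. *)
Section Localization.
Context {X : Type} (h : nat -> set X) (A : set X).
Hypothesis hdet : determined_by h (fun M => N_eq A M (Some 0)).

Lemma empty_trace_single w : N_eq A (single_CS w) (Some 0) <-> ~ A w.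
Proof.
  unfold N_eq; cbn [proj1_sig single_CS empty_CS insert_CS range_CS]; rewrite has_card_0.
  split; [intros c Aw; exact (c w (conj Aw eq_refl)) | intros c z [Az ->]; auto].
Qed.

Lemma same_counts_single x z : (forall j, h j x <-> h j z) -> same_counts h (single_CS x) (single_CS z).
Proof.
  intros hxz j k; unfold N_eq; cbn [proj1_sig single_CS empty_CS insert_CS range_CS].
  destruct (classic (h j x)) as [hx|hx].
  - assert (hz : h j z) by (apply hxz; exact hx).
    rewrite (has_card_eq _ _ (has_card_1 _ x (conj hx eq_refl) (fun w hw => proj2 hw))).
    rewrite (has_card_eq _ _ (has_card_1 _ z (conj hz eq_refl) (fun w hw => proj2 hw))).
    reflexivity.
  - assert (hz : ~ h j z) by (rewrite <- hxz; exact hx).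
    rewrite (has_card_eq (fun w => h j w /\ w = x) (Some 0)), (has_card_eq (fun w => h j w /\ w = z) (Some 0));
      [reflexivity | |]; apply has_card_0; intros w [hw ->]; auto.
Qed.

(* If x lay in no h_j, then {x} and ∅ would have the same counts. *)
Lemma covered x : A x -> exists k, h k x.
Proof.
  intros Ax; apply NNPP; intros nk.
  assert (s : same_counts h (single_CS x) empty_CS).
  { intros j k; unfold N_eq; cbn [proj1_sig single_CS empty_CS insert_CS range_CS].
    rewrite (set_ext (fun z => h j z /\ z = x) (fun z => h j z /\ False)); [reflexivity|].
    intros z; split; [intros [hz ->]; exfalso; eauto | tauto]. }
  apply (proj1 (empty_trace_single x)); [|exact Ax].
  apply (hdet _ _ s); unfold N_eq; cbn [proj1_sig single_CS empty_CS insert_CS range_CS]; apply has_card_0; tauto.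
Qed.

(* If y_n agrees with x on h_0, ..., h_{n-1} and takes each value finitely often,
   adding x to the range of y changes no count: in the h_j containing x both
   counts are infinite, and the other h_j do not see x. *)
Lemma same_counts_insert x (y : nat -> X) :
  (forall n j, j < n -> (h j (y n) <-> h j x)) ->
  (forall z, exists N, forall n, N <= n -> y n <> z) ->
  same_counts h (insert_CS x y) (range_CS y).
Proof.
  intros agree escape j k; unfold N_eq; cbn [proj1_sig single_CS empty_CS insert_CS range_CS].
  destruct (classic (h j x)) as [hx|hx].
  - assert (tail : forall l, exists z, (h j z /\ exists n, y n = z) /\ ~ In z l).
    { intros l; destruct (eventually_avoids_list y escape l) as [N hN].
      exists (y (N + S j)); split; [split; [apply agree; [lia | exact hx] | eauto] | apply hN; lia]. }
    rewrite (has_card_eq _ None), (has_card_eq (fun z => h j z /\ exists n, y n = z) None);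
      [reflexivity | |]; apply has_card_infinite; [exact tail|].
    intros l; destruct (tail l) as [z [[hz hy] nz]]; exists z; auto.
  - rewrite (set_ext (fun z => h j z /\ (z = x \/ exists n, y n = z)) (fun z => h j z /\ exists n, y n = z));
      [reflexivity|].
    intros z; split; [intros [hz [->|hy]]; [contradiction | auto] | tauto].
Qed.

(* Otherwise pick y_n ∉ A agreeing with x on h_0, ..., h_{n-1}: a value taken
   infinitely often contradicts [same_counts_single], and a sequence taking each
   value finitely often contradicts [same_counts_insert]. *)
Lemma locally_in x : A x -> exists n, forall z, (forall j, j < n -> (h j z <-> h j x)) -> A z.
Proof.
  intros Ax; apply NNPP; intros hn.
  assert (bad : forall n, exists z, (forall j, j < n -> (h j z <-> h j x)) /\ ~ A z).
  { intros n; apply NNPP; intros c; apply hn; exists n.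
    intros z hz; apply NNPP; intros nAz; apply c; eauto. }
  apply choice in bad as [y hy].
  destruct (classic (exists z, forall N, exists n, N <= n /\ y n = z)) as [[z hz]|hrec].
  - assert (agree : forall j, h j x <-> h j z).
    { intros j; destruct (hz (S j)) as [n [le <-]]; symmetry; apply hy; lia. }
    assert (nAz : ~ A z) by (destruct (hz 0) as [n [_ <-]]; apply hy).
    apply (proj1 (empty_trace_single x)); [|exact Ax].
    apply (hdet _ _ (same_counts_single x z agree)), empty_trace_single, nAz.
  - assert (escape : forall z, exists N, forall n, N <= n -> y n <> z).
    { intros z; apply NNPP; intros c; apply hrec; exists z; intros N.
      apply NNPP; intros c'; apply c; exists N; intros n le e; apply c'; eauto. }
    pose proof (hdet _ _ (same_counts_insert x y (fun n => proj1 (hy n)) escape)) as s.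
    unfold N_eq in s; cbn [proj1_sig insert_CS range_CS] in s; rewrite !has_card_0 in s.
    refine (proj2 s _ x (conj Ax (or_introl eq_refl))).
    intros z [Az [n <-]]; exact (proj2 (hy n) Az).
Qed.
End Localization.

Lemma bit_pattern (P : nat -> Prop) n : exists p, forall j, j < n -> (Nat.testbit p j = true <-> P j).
Proof.
  revert P; induction n as [|n IH]; intros P; [exists 0; intros j lt; lia|].
  destruct (IH (fun j => P (S j))) as [p hp].
  destruct (classic (P 0)) as [P0|nP0].
  - exists (2 * p + 1); intros [|j] lt.
    + rewrite Nat.testbit_odd_0; tauto.
    + rewrite Nat.testbit_odd_succ'; apply hp; lia.
  - exists (2 * p); intros [|j] lt.
    + rewrite Nat.testbit_even_0; split; [discriminate | tauto].
    + rewrite Nat.testbit_even_succ'; apply hp; lia.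
Qed.

Section Atoms.
Context {X : Type} (H : set (set X)) (hH : semiring H) (h : nat -> set X) (hh : forall j, H (h j)).

Definition atom (k n p : nat) : set X :=
  fun z => h k z /\ forall j, j < n -> (h j z <-> Nat.testbit p j = true).

(* Each step intersects with h_n or removes h_n. *)
Lemma atom_decomp k n p : exists l, disjoint_decomp H (atom k n p) l.
Proof.
  induction n as [|n [l hl]].
  - exists [h k]; split; [|split].
    + intros C [<-|[]]; auto.
    + split; [intros D z [] | exact I].
    + intros z; unfold atom; split.
      * intros [hk _]; exists (h k); split; [left|]; auto.
      * intros [C [[<-|[]] hz]]; split; auto; intros j lt; lia.
  - destruct (Nat.testbit p n) eqn:bit.
    + exists (map (fun C z => C z /\ h n z) l).
      rewrite (set_ext (atom k (S n) p) (fun z => atom k n p z /\ h n z)); [exact (decomp_inter H hH l _ _ hl (hh n))|].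
      intros z; unfold atom; split.
      * intros [hk hz]; split; [split; auto; intros j lt; apply hz; lia | apply hz; auto; lia].
      * intros [[hk hz] hnz]; split; auto; intros j lt.
        destruct (Nat.eq_dec j n) as [->|ne]; [rewrite bit; tauto | apply hz; lia].
    + destruct (decomp_diff H hH l _ _ hl (hh n)) as [l' hl']; exists l'.
      rewrite (set_ext (atom k (S n) p) (fun z => atom k n p z /\ ~ h n z)); [exact hl'|].
      intros z; unfold atom; split.
      * intros [hk hz]; split; [split; auto; intros j lt; apply hz; lia|].
        rewrite (hz n); [rewrite bit; discriminate | lia].
      * intros [[hk hz] nhnz]; split; auto; intros j lt.
        destruct (Nat.eq_dec j n) as [->|ne]; [rewrite bit; split; [tauto | discriminate] | apply hz; lia].
Qed.
End Atoms.

Section CountableUnions.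
Context {X : Type} (H : set (set X)).

Lemma cu_ext A B : countable_union_of H A -> (forall z, A z <-> B z) -> countable_union_of H B.
Proof. intros hA e; rewrite <- (set_ext _ _ e); exact hA. Qed.

(* Finite disjoint unions are countable unions, padded with the empty set. *)
Lemma cu_decomp A l : H (fun _ => False) -> disjoint_decomp H A l -> countable_union_of H A.
Proof.
  intros h0 [hlH [_ hlu]]; exists (fun n => nth n l (fun _ => False)); split.
  - intros n; cbv beta; destruct (nth_in_or_default n l (fun _ => False)) as [hin | ->]; auto.
  - intros z; rewrite hlu; split.
    + intros [C [hC Cz]]; destruct (@In_nth (set X) l C (fun _ => False) hC) as [n [_ e]].
      exists n; rewrite e; exact Cz.
    + intros [n hz]; cbv beta in hz; destruct (nth_in_or_default n l (fun _ => False)) as [hin | e]; [eauto|].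
      rewrite e in hz; destruct hz.
Qed.

(* Countable unions of countable unions, reindexed by Cantor pairing. *)
Lemma cu_union (A : nat -> set X) : (forall n, countable_union_of H (A n)) ->
  countable_union_of H (fun z => exists n, A n z).
Proof.
  intros hA; apply choice in hA as [B hB].
  exists (fun m => B (fst (of_nat m)) (snd (of_nat m))); split.
  - intros m; apply hB.
  - intros z; split.
    + intros [n Az]; apply (proj2 (hB n)) in Az as [i hi].
      exists (to_nat (n, i)); rewrite cancel_of_to; exact hi.
    + intros [m hm]; exists (fst (of_nat m)); apply (proj2 (hB _)); eauto.
Qed.
End CountableUnions.

(* (⇒) for one set: if "A ∩ M = ∅" is an event of C(H), then A is the union of
   the countably many atoms contained in it, by [covered] and [locally_in]. *)
Lemma cu_of_empty_trace {X : Type} (H : set (set X)) (A : set X) : semiring H ->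
  calC H (fun M => N_eq A M (Some 0)) -> countable_union_of H A.
Proof.
  intros hH hY.
  destruct (calC_countably_determined H _ (ex_intro _ _ (proj1 hH)) hY) as [h [hh hdet]].
  set (piece := fun k n p z => atom h k n p z /\ forall w, atom h k n p w -> A w).
  assert (hpiece : forall k n p, countable_union_of H (piece k n p)).
  { intros k n p; destruct (classic (forall w, atom h k n p w -> A w)) as [sub|nsub].
    - destruct (atom_decomp H hH h hh k n p) as [l hl].
      apply (cu_ext _ _ _ (cu_decomp H _ l (proj1 hH) hl)); unfold piece; tauto.
    - apply (cu_decomp H _ [] (proj1 hH)); split; [intros C [] | split; [exact I|]].
      intros z; unfold piece; split; [tauto | intros [C [[] _]]]. }
  apply (cu_ext _ (fun z => exists k n p, piece k n p z)).
  - apply (cu_union H (fun k z => exists n p, piece k n p z)); intros k.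
    apply (cu_union H (fun n z => exists p, piece k n p z)); intros n.
    apply (cu_union H (fun p z => piece k n p z)); intros p.
    apply hpiece.
  - intros z; split; [intros [k [n [p [az sub]]]]; exact (sub z az)|].
    intros Az.
    destruct (covered h A hdet z Az) as [k hk].
    destruct (locally_in h A hdet z Az) as [n hn].
    destruct (bit_pattern (fun j => h j z) n) as [p hp].
    exists k, n, p; split.
    + split; auto; intros j lt; rewrite hp; tauto.
    + intros w [_ hw]; apply hn; intros j lt; rewrite (hw j lt), hp; tauto.
Qed.

Theorem theorem3p5 (S : Type) (T H : set (set S))
  (hTne : exists A, T A)
  (hsep : exists E : nat -> set S, (forall n, T (E n)) /\ separates E)
  (hH : semiring H) :
  (forall Y, calC T Y -> calC H Y) <-> (forall A, T A -> countable_union_of H A).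
Proof.
  split.
  - (* "A ∩ M = ∅" is a generator of C(T), hence an event of C(H). *)
    intros hC A hA; apply (cu_of_empty_trace H A hH), hC, sigma_gen_incl.
    exists A, (Some 0); auto.
  -
    intros hU Y hY; apply hY; [apply sigma_gen_is_sigma_algebra|].
    intros Z [A [k [hA ->]]]; apply cm_level, cm_countable_union; auto.
Qed.
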